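(* In the brand-effects model, let the greedy allocation be defined by, for $k=1,\dots,s$ in order, placing in position $k$ the not-yet-placed ad with the highest normalized eCPM for position $k$. Then (i) for every instance, the total expected welfare of the greedy allocation is at least half of the maximum possible total expected welfare; and (ii) this bound is tight: for every $c>\frac12$ there is an instance in which the greedy allocation's total expected welfare is less than $c$ times the maximum possible total expected welfare.
   Context: Brand-effects model: there are $s$ positions and a set of advertisers, each either a brand advertiser or a non-brand advertiser; advertiser $i$ has quality score $q_i \ge 0$ and bid $b_i \ge 0$, and its eCPM bid is $b_i q_i$. Each position $k$ has two quality scores $\beta_k$ and $\eta_k$, both non-increasing in $k$, normalized so $\beta_1=\eta_1=1$. A brand (resp. non-brand) advertiser with quality $q$ shown in position $k$ is clicked with probability $\beta_k q$ (resp. $\eta_k q$). An allocation places distinct advertisers in the positions; its total expected welfare is $\sum_j b_{(j)} p_{(j)}$, where $b_{(j)}$ and $p_{(j)}$ are the bid and click probability of the ad in position $j$. The normalized eCPM of advertiser $i$ for position $k$ is $\beta_k b_i q_i$ if $i$ is a brand advertiser and $\eta_k b_i q_i$ if $i$ is a non-brand advertiser. *)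

From HB Require Import structures.
From mathcomp Require Import all_boot all_order all_algebra.
Set Implicit Arguments. Unset Strict Implicit. Unset Printing Implicit Defensive.
Import Order.TTheory GRing.Theory Num.Theory.
Local Open Scope ring_scope.

(* An instance: [nads] advertisers indexed by 'I_nads, [npos] positions
   indexed by 'I_npos (position k of the paper is the ordinal k-1). *)
Record instance (R : realFieldType) := Instance {
  nads  : nat;
  npos  : nat;
  brand : 'I_nads -> bool;
  qual  : 'I_nads -> R;
  bid   : 'I_nads -> R;
  beta  : 'I_npos -> R;      (* position quality for brand ads *)
  eta   : 'I_npos -> R       (* position quality for non-brand ads *)
}.

Arguments nads {R} _ : rename.
Arguments npos {R} _ : rename.
Arguments brand {R} _ : rename.
Arguments qual {R} _ : rename.
Arguments bid {R} _ : rename.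
Arguments beta {R} _ : rename.
Arguments eta {R} _ : rename.

Section Model.
Variable R : realFieldType.
Variable I : instance R.

Definition wf_instance : Prop :=
  [/\ forall i, 0 <= qual I i,
      forall i, 0 <= bid I i,
      forall k : 'I_(npos I), 0 <= beta I k /\ 0 <= eta I k,
      forall k l : 'I_(npos I), (k <= l)%N -> beta I l <= beta I k /\ eta I l <= eta I k
    & forall k : 'I_(npos I), nat_of_ord k = 0%N -> beta I k = 1 /\ eta I k = 1].

Definition click_prob (i : 'I_(nads I)) (k : 'I_(npos I)) : R :=
  (if brand I i then beta I k else eta I k) * qual I i.

Definition norm_ecpm (i : 'I_(nads I)) (k : 'I_(npos I)) : R :=
  (if brand I i then beta I k else eta I k) * (bid I i * qual I i).

Definition allocation := {ffun 'I_(npos I) -> option 'I_(nads I)}.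

Definition valid_alloc (a : allocation) : bool :=
  [forall k1, forall k2, forall i,
     ((a k1 == Some i) && (a k2 == Some i)) ==> (k1 == k2)].

Definition welfare (a : allocation) : R :=
  \sum_(k : 'I_(npos I))
     match a k with Some i => bid I i * click_prob i k | None => 0 end.

Definition opt_welfare : R :=
  \big[Num.max/0]_(a : allocation | valid_alloc a) welfare a.

Definition placed_before (a : allocation) (k : 'I_(npos I)) (i : 'I_(nads I)) : bool :=
  [exists k' : 'I_(npos I), (k' < k)%N && (a k' == Some i)].

(* a is a greedy allocation (with arbitrary tie-breaking): at each position k,
   in order, it places a not-yet-placed ad of maximum normalized eCPM for k,
   and leaves k empty only when every ad has already been placed. *)
Definition is_greedy (a : allocation) : Prop :=
  forall k : 'I_(npos I),
    match a k with
    | Some i => ~~ placed_before a k i /\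
                forall j, ~~ placed_before a k j -> norm_ecpm j k <= norm_ecpm i k
    | None => forall j, placed_before a k j
    end.

End Model.

From HB Require Import structures.
From mathcomp Require Import all_boot all_order all_algebra.
From mathcomp Require Import lra ring.
Import Order.TTheory GRing.Theory Num.Theory.
Local Open Scope ring_scope.

(* Half-approximation: charge every slot k of an allocation b to the greedy
   allocation a.  If the ad b k was still unplaced when the greedy rule filled
   slot k, its normalized eCPM at k is at most that of a k; otherwise it was
   placed earlier, at some k' < k, and its value at k is at most its value at
   k', which is a's value at k'.  Since b places each ad at most once, every
   greedy slot k' absorbs at most one charge of the second kind, so the value
   of b is at most twice the value of a.

   Tightness: a brand ad of eCPM 1 and a non-brand ad of eCPM d < 1, with
   eta = (1, 0) and beta = (1, 1).  Greedy puts the brand ad first and then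
   gains nothing in slot 2, for welfare 1, while the reverse order earns
   1 + d; letting d tend to 1 makes the ratio tend to 1/2. *)

Section GreedyHalfApproximation.
Variables (R : realFieldType) (I : instance R).
Hypothesis wfI : wf_instance I.

Definition slot_value (a : allocation I) (k : 'I_(npos I)) : R :=
  if a k is Some i then norm_ecpm i k else 0.

Lemma welfare_slot_value (a : allocation I) : welfare a = \sum_k slot_value a k.
Proof.
apply: eq_bigr => k _; rewrite /slot_value; case: (a k) => // i.
by rewrite /click_prob /norm_ecpm mulrCA.
Qed.

Lemma norm_ecpm_ge0 (i : 'I_(nads I)) (k : 'I_(npos I)) : 0 <= norm_ecpm i k.
Proof.
case: wfI => q_ge0 b_ge0 pos_ge0 _ _.
rewrite /norm_ecpm !mulr_ge0 //.
by case: (brand I i); case: (pos_ge0 k).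
Qed.

Lemma slot_value_ge0 (a : allocation I) (k : 'I_(npos I)) : 0 <= slot_value a k.
Proof. by rewrite /slot_value; case: (a k) => // i; exact: norm_ecpm_ge0. Qed.

Lemma norm_ecpm_nonincr (i : 'I_(nads I)) (k k' : 'I_(npos I)) :
  (k' <= k)%N -> norm_ecpm i k <= norm_ecpm i k'.
Proof.
case: wfI => q_ge0 b_ge0 _ pos_nonincr _ le_k'k.
rewrite /norm_ecpm ler_wpM2r ?mulr_ge0 //.
by case: (brand I i); case: (pos_nonincr _ _ le_k'k).
Qed.

Definition charge (a b : allocation I) (k : 'I_(npos I)) : R :=
  \sum_(k' | a k' == b k) slot_value a k'.

Lemma slot_value_le_greedy (a b : allocation I) k :
  is_greedy a -> slot_value b k <= slot_value a k + charge a b k.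
Proof.
move=> greedy_a.
have charge_ge0 : 0 <= charge a b k by apply: sumr_ge0 => k' _; exact: slot_value_ge0.
rewrite {1}/slot_value; case bk: (b k) => [o|]; last first.
  by rewrite addr_ge0 ?slot_value_ge0.
have [/existsP[k' /andP[lt_k'k /eqP ak']] | unplaced] := boolP (placed_before a k o).
  have charge_k' : slot_value a k' <= charge a b k.
    by rewrite /charge (bigD1 k') ?ak' ?bk //= lerDl sumr_ge0 // => *; exact: slot_value_ge0.
  rewrite -[norm_ecpm o k]add0r lerD ?slot_value_ge0 // (le_trans _ charge_k') //.
  by rewrite /slot_value ak' norm_ecpm_nonincr // ltnW.
move: (greedy_a k); rewrite /slot_value; case: (a k) => [g [_ g_max]|no_slot].
  by rewrite -[norm_ecpm o k]addr0 lerD // g_max.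
by move: (no_slot o); rewrite (negbTE unplaced).
Qed.

Lemma card_slots_le1 (b : allocation I) (i : 'I_(nads I)) :
  valid_alloc b -> (#|[pred k | Some i == b k]| <= 1)%N.
Proof.
move=> /forallP valid_b; apply/card_le1_eqP => k1 k2 /eqP bk1 /eqP bk2.
have /forallP/(_ i)/implyP := forallP (valid_b k1) k2.
by rewrite -bk1 -bk2 eqxx => /(_ isT)/eqP.
Qed.

Lemma sum_charge_le (a b : allocation I) :
  valid_alloc b -> \sum_k charge a b k <= \sum_k slot_value a k.
Proof.
move=> valid_b; rewrite /charge (exchange_big_dep xpredT) //=.
apply: ler_sum => k' _; rewrite sumr_const.
rewrite /slot_value; case ak': (a k') => [i|]; last by rewrite mul0rn.
rewrite -[leRHS]mulr1n ler_wpMn2l ?norm_ecpm_ge0 //.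
exact: card_slots_le1.
Qed.

Lemma welfare_le_twice_greedy (a b : allocation I) :
  is_greedy a -> valid_alloc b -> welfare b <= welfare a *+ 2.
Proof.
move=> greedy_a valid_b; rewrite !welfare_slot_value mulr2n.
apply: le_trans (_ : \sum_k (slot_value a k + charge a b k) <= _).
  by apply: ler_sum => k _; exact: slot_value_le_greedy.
by rewrite big_split lerD // sum_charge_le.
Qed.

Lemma greedy_half_opt (a : allocation I) :
  is_greedy a -> opt_welfare I / 2 <= welfare a.
Proof.
move=> greedy_a.
have welfare_ge0 : 0 <= welfare a.
  by rewrite welfare_slot_value sumr_ge0 // => k _; exact: slot_value_ge0.
suff : opt_welfare I <= welfare a *+ 2 by rewrite mulr2n; lra.
rewrite /opt_welfare bigmax_le ?mulrn_wge0 // => b valid_b.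
exact: welfare_le_twice_greedy.
Qed.

End GreedyHalfApproximation.

Lemma ord2_cases (k : 'I_2) : k = ord0 \/ k = ord_max.
Proof. by case: k => [[|[|k]] // ?]; [left | right]; apply: val_inj. Qed.

Section TightExample.
Context {R : realFieldType} (d : R).
Hypotheses (d_ge0 : 0 <= d) (d_lt1 : d < 1).

Definition brand_first_instance : instance R :=
  @Instance R 2 2 (fun i => i == ord0) (fun _ => 1)
    (fun i => if i == ord0 then 1 else d) (fun _ => 1)
    (fun k => if k == ord0 then 1 else 0).

Local Notation J := brand_first_instance.

Lemma brand_first_wf : wf_instance J.
Proof.
split => //=.
- by move=> i; case: ifP.
- by move=> k; case: ifP.
- by move=> [[|[|k]] ?] [[|[|l]] ?].
- by move=> [[|[|k]] ?].
Qed.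

Definition diagonal_alloc : allocation J := [ffun k => Some k].

Lemma nothing_placed_before_ord0 (a : allocation J) i : ~~ placed_before a ord0 i.
Proof. by apply/existsP => -[k' /andP[]]. Qed.

Lemma greedy_brand_first (a : allocation J) :
  is_greedy a -> a = diagonal_alloc.
Proof.
move=> greedy_a.
have a0 : a ord0 = Some ord0.
  move: (greedy_a ord0); case: (a ord0) => [i [_ i_max]|]; last first.
    by move=> /(_ ord0); rewrite (negbTE (nothing_placed_before_ord0 _ _)).
  case: (ord2_cases i) i_max => -> // /(_ ord0 (nothing_placed_before_ord0 _ _)).
  by rewrite /norm_ecpm /= !mul1r !mulr1 leNgt d_lt1.
have a1 : a ord_max = Some ord_max.
  move: (greedy_a ord_max); case: (a ord_max) => [i [unplaced _]|all_placed].
    case: (ord2_cases i) unplaced => -> // /negP[].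
    by apply/existsP; exists ord0; rewrite a0.
  have /existsP[k' /andP[lt_k' /eqP ak']] := all_placed ord_max.
  by move: lt_k' ak'; case: (ord2_cases k') => ->; rewrite ?a0.
by apply/ffunP => k; rewrite ffunE; case: (ord2_cases k) => ->.
Qed.

Lemma is_greedy_diagonal_alloc : is_greedy diagonal_alloc.
Proof.
move=> k; rewrite ffunE; case: (ord2_cases k) => ->; split.
- exact: nothing_placed_before_ord0.
- by move=> j _; case: (ord2_cases j) => ->; rewrite /norm_ecpm /= ?mul1r ?mulr1 // ltW.
- by apply/existsP => -[k' /andP[]]; case: (ord2_cases k') => -> //; rewrite ffunE.
- move=> j; case: (ord2_cases j) => -> // /negP[].
  by apply/existsP; exists ord0; rewrite ffunE.
Qed.

Lemma welfare_diagonal_alloc : welfare diagonal_alloc = 1.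
Proof. by rewrite /welfare !big_ord_recl big_ord0 !ffunE /click_prob /=; lra. Qed.

Lemma opt_welfare_brand_first_ge : 1 + d <= opt_welfare J.
Proof.
pose b : allocation J := [ffun k => Some (rev_ord k)].
have valid_b : valid_alloc b.
  apply/forallP => k1; apply/forallP => k2; apply/forallP => i; rewrite !ffunE.
  apply/implyP => /andP[/eqP[<-] /eqP[]].
  by case: k1 => [[|[|k1]] ?]; case: k2 => [[|[|k2]] ?].
have -> : 1 + d = welfare b.
  by rewrite /welfare !big_ord_recl big_ord0 !ffunE /click_prob /=; lra.
exact: le_bigmax_cond.
Qed.

End TightExample.

Lemma greedy_half_tight (R : realFieldType) (c : R) : 1 / 2 < c ->
  exists I : instance R, wf_instance I /\
    (exists a : allocation I, is_greedy a) /\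
    (forall a : allocation I, is_greedy a -> welfare a < c * opt_welfare I).
Proof.
move=> c_gt_half; pose d := (c *+ 2)^-1.
have d_ge0 : 0 <= d by rewrite invr_ge0; lra.
have cd : c * d = 1 / 2 by rewrite /d; field; lra.
have d_lt1 : d < 1 by nra.
exists (brand_first_instance d); split; first exact: brand_first_wf.
split; first by exists (diagonal_alloc d); exact: is_greedy_diagonal_alloc.
move=> a /(greedy_brand_first _ d_lt1) ->; rewrite welfare_diagonal_alloc.
by apply: lt_le_trans (ler_wpM2l _ (opt_welfare_brand_first_ge d)); nra.
Qed.

Theorem theorem6 (R : realFieldType) :
  (forall I : instance R, wf_instance I ->
     forall a : allocation I, is_greedy a -> opt_welfare I / 2 <= welfare a)
  /\
  (forall c : R, 1 / 2 < c ->
     exists I : instance R, wf_instance I /\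
       (exists a : allocation I, is_greedy a) /\
       (forall a : allocation I, is_greedy a -> welfare a < c * opt_welfare I)).
Proof.
split; first exact: greedy_half_opt.
exact: greedy_half_tight.
Qed.
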